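(* Let $\mathcal{B}$ be a real Banach space having a pre-dual space $\mathcal{B}_*$, let $\nu_j\in\mathcal{B}_*$, $j\in\mathbb{N}_m$, be linearly independent, and let $\mathbf{y}\in\mathbb{R}^m\setminus\{0\}$. For $\mathbf{c}\in\mathbb{R}^m$ put $\mathcal{L}^*(\mathbf{c}):=\sum_{j\in\mathbb{N}_m}c_j\nu_j$, and let (D) denote the problem $\inf\{\|\mathcal{L}^*(\mathbf{c})\|_{\mathcal{B}_*}:\langle\mathbf{c},\mathbf{y}\rangle_{\mathbb{R}^m}=1,\ \mathbf{c}\in\mathbb{R}^m\}$. Then: (a) if $\hat f$ is a solution of the minimum norm interpolation problem with data $\mathbf{y}$, there exists a solution $\hat{\mathbf{c}}$ of (D) such that $$\hat f\in\frac{1}{\|\mathcal{L}^*(\hat{\mathbf{c}})\|_{\mathcal{B}_*}}\partial\|\cdot\|_{\mathcal{B}_*}(\mathcal{L}^*(\hat{\mathbf{c}}))\cap\mathcal{M}_{\mathbf{y}};$$ (b) conversely, if $\hat{\mathbf{c}}$ is a solution of (D) and $\hat f\in\mathcal{B}$ belongs to the set displayed in (a), then $\hat f$ is a solution of the minimum norm interpolation problem with data $\mathbf{y}$.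
   Context: $\mathcal{B}$ is a real Banach space with dual $\mathcal{B}^*$ and pairing $\langle\nu,f\rangle_{\mathcal{B}}:=\nu(f)$; $\mathbb{N}_m:=\{1,\dots,m\}$; $\mathcal{L}(f):=[\langle\nu_j,f\rangle_{\mathcal{B}}:j\in\mathbb{N}_m]$, $\mathcal{M}_{\mathbf{y}}:=\{f\in\mathcal{B}:\mathcal{L}(f)=\mathbf{y}\}$; a solution of the minimum norm interpolation problem with data $\mathbf{y}$ is an $\hat f\in\mathcal{M}_{\mathbf{y}}$ with $\|\hat f\|_{\mathcal{B}}=\inf\{\|f\|_{\mathcal{B}}:f\in\mathcal{M}_{\mathbf{y}}\}$. A normed space $\mathcal{B}_*$ is a pre-dual of $\mathcal{B}$ if $(\mathcal{B}_* )^*=\mathcal{B}$, with $\langle\nu,f\rangle_{\mathcal{B}}=f(\nu)$ for $\nu\in\mathcal{B}_*$. For a convex $\phi$ on a real normed space $X$, $\partial\phi(x):=\{\mu\in X^*:\phi(z)-\phi(x)\ge\mu(z-x)\ \forall z\in X\}$. *)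

From HB Require Import structures.
From mathcomp Require Import all_boot all_order all_algebra.
From mathcomp Require Import all_classical all_reals all_analysis.
Set Implicit Arguments. Unset Strict Implicit. Unset Printing Implicit Defensive.
Import Order.TTheory GRing.Theory Num.Theory.
Import numFieldNormedType.Exports.
Local Open Scope classical_set_scope.
Local Open Scope ring_scope.

(* The pre-dual B_* is a real normed space [V]; the Banach space B is its
   (topological) dual: B = (B_* )^*, with pairing <nu, f>_B := f nu. *)

Definition in_dual (R : realType) (V : normedModType R) (f : V -> R) : Prop :=
  (forall (a : R) (x z : V), f (a *: x + z) = a * f x + f z) /\ continuous f.

Definition dual_norm (R : realType) (V : normedModType R) (f : V -> R) : R :=
  sup [set `|f x| | x in [set x : V | `|x| <= 1]].

Definition lin_indep (R : realType) (V : normedModType R) (m : nat)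
  (nu : 'I_m -> V) : Prop :=
  forall c : 'I_m -> R, \sum_(j < m) c j *: nu j = 0 -> forall j, c j = 0.

Definition interp_set (R : realType) (V : normedModType R) (m : nat)
  (nu : 'I_m -> V) (y : 'I_m -> R) : set (V -> R) :=
  [set f | in_dual f /\ forall j, f (nu j) = y j].

Definition mni_solution (R : realType) (V : normedModType R) (m : nat)
  (nu : 'I_m -> V) (y : 'I_m -> R) (f : V -> R) : Prop :=
  interp_set nu y f /\
  dual_norm f = inf [set dual_norm g | g in interp_set nu y].

Definition Lstar (R : realType) (V : normedModType R) (m : nat)
  (nu : 'I_m -> V) (c : 'I_m -> R) : V := \sum_(j < m) c j *: nu j.

Definition dot (R : realType) (m : nat) (c y : 'I_m -> R) : R :=
  \sum_(j < m) c j * y j.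

Definition D_solution (R : realType) (V : normedModType R) (m : nat)
  (nu : 'I_m -> V) (y : 'I_m -> R) (c : 'I_m -> R) : Prop :=
  dot c y = 1 /\
  `|Lstar nu c| = inf [set `|Lstar nu c'| | c' in [set c' | dot c' y = 1]].

Definition subdiff_norm (R : realType) (V : normedModType R) (x : V)
  : set (V -> R) :=
  [set mu | in_dual mu /\ forall z : V, `|z| - `|x| >= mu (z - x)].

Definition dual_char_set (R : realType) (V : normedModType R) (m : nat)
  (nu : 'I_m -> V) (y : 'I_m -> R) (c : 'I_m -> R) : set (V -> R) :=
  [set f | (exists2 g, subdiff_norm (Lstar nu c) g &
              f = (fun v => (`|Lstar nu c|)^-1 * g v))
           /\ interp_set nu y f].

From mathcomp Require Import all_boot all_order all_algebra.
From mathcomp Require Import all_classical all_reals all_analysis.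
From mathcomp Require Import lra.
Import Order.TTheory GRing.Theory Num.Theory.
Import numFieldNormedType.Exports.
Local Open Scope classical_set_scope.
Local Open Scope ring_scope.
Set Implicit Arguments. Unset Strict Implicit. Unset Printing Implicit Defensive.

(* For c in R^m write x_c := L^*(c) = sum_j c_j nu_j.
   - Lower bound: every interpolant h satisfies h(x_c) = <c,y>, so
     ||h|| >= 1/|x_c| whenever <c,y> = 1.
   - Part (b): an element g of the subdifferential of |.| at x is bounded by 1,
     so f = g/|x_c| has ||f|| <= 1/|x_c|, matching the lower bound.
   - Part (a): the dual problem (D) has a minimizer c (a coercive continuous
     function on a closed set of R^m, coercivity coming from the linear
     independence of the nu_j); with d := |x_c| the functional x_a |-> <a,y> on
     span(nu) is well defined and dominated by |.|/d, and the Hahn-Banach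
     theorem (proved here via Zorn's lemma on graphs of dominated partial
     linear functionals) extends it to an interpolant of norm <= 1/d.  Hence a
     minimal interpolant f has ||f|| <= 1/d and f(x_c) = 1, so d f lies in the
     subdifferential of |.| at x_c. *)

Section LinearFunctional.
Variables (R : realType) (V : lmodType R).

Definition lin (f : V -> R) : Prop :=
  forall (a : R) (x z : V), f (a *: x + z) = a * f x + f z.

Variable f : V -> R.
Hypothesis lf : lin f.

Lemma lin0 : f 0 = 0.
Proof.
have := lf 1 0 0; rewrite scale1r addr0 mul1r => h.
by apply: (addrI (f 0)); rewrite addr0 -h.
Qed.

Lemma linD x z : f (x + z) = f x + f z.
Proof. by rewrite -[x in LHS]scale1r lf mul1r. Qed.

Lemma linZ a x : f (a *: x) = a * f x.
Proof. by rewrite -[_ *: _]addr0 lf lin0 addr0. Qed.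

Lemma linN x : f (- x) = - f x.
Proof. by rewrite -scaleN1r linZ mulN1r. Qed.

Lemma linB x z : f (x - z) = f x - f z.
Proof. by rewrite linD linN. Qed.

Lemma lin_sum (I : finType) (c : I -> R) (v : I -> V) :
  f (\sum_i c i *: v i) = \sum_i c i * f (v i).
Proof.
apply: (big_ind2 (fun a b => f a = b)) => [|a b a' b' <- <-|i _].
- exact: lin0.
- by rewrite linD.
- by rewrite linZ.
Qed.

End LinearFunctional.

Section BoundedFunctional.
Variables (R : realType) (V : normedModType R).

Lemma bounded_lin_continuous (f : V -> R) K : lin f ->
  (forall x, `|f x| <= K * `|x|) -> continuous f.
Proof.
move=> lf fK x.
have K1 : 0 < `|K| + 1 by rewrite ltr_wpDl.
have fK' z : `|f z| <= (`|K| + 1) * `|z|.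
  by rewrite (le_trans (fK z))// ler_wpM2r// (le_trans (ler_norm _))// lerDl.
apply/(@cvgrPdist_lt _ _ _ (nbhs x)) => e e_gt0; near=> z.
rewrite -linB// (le_lt_trans (fK' _))// -ltr_pdivlMl//.
near: z; apply: cvgr_dist_lt => //; rewrite mulrC divr_gt0//.
Unshelve. all: by end_near. Qed.

Lemma continuous_lin_bounded (f : V -> R) : lin f -> continuous f ->
  exists2 K, 0 < K & forall x, `|f x| <= K * `|x|.
Proof.
move=> lf cf.
have := cf 0 => /(@cvgr_dist_lt _ _ _ (nbhs (0:V))) /(_ 1 ltr01).
rewrite (lin0 lf) => /nbhs_norm0P[e /= e0 he].
exists (2 / e); first by rewrite divr_gt0.
move=> x; have [->|x0] := eqVneq x 0; first by rewrite (lin0 lf) !normr0 mulr0.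
have nx : 0 < `|x| by rewrite normr_gt0.
pose t := e / 2 / `|x|.
have t0 : 0 < t by rewrite /t !divr_gt0.
have : `|0 - f (t *: x)| < 1.
  apply: he => /=; rewrite normrZ gtr0_norm// /t divfK ?gt_eqF//.
  by rewrite ltr_pdivrMr// ltr_pMr// ltr1n.
rewrite sub0r normrN linZ// normrM gtr0_norm// => ft1.
have : `|f x| < t^-1 by rewrite -(ltr_pM2l t0) mulfV ?gt_eqF.
move=> /ltW /le_trans; apply.
by rewrite /t !invfM !invrK [e^-1 * 2]mulrC.
Qed.

Lemma in_dualZ (f : V -> R) a : in_dual f -> in_dual (fun v => a * f v).
Proof.
move=> [lf cf]; have [K _ fK] := continuous_lin_bounded lf cf.
have laf : lin (fun v => a * f v) by move=> b u z; rewrite lf mulrDr mulrCA.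
split => //; apply: (bounded_lin_continuous (K := `|a| * K)) => // x.
by rewrite normrM -mulrA ler_wpM2l.
Qed.

End BoundedFunctional.

Section DualNorm.
Variables (R : realType) (V : normedModType R) (f : V -> R).

Lemma dual_norm_has_sup : in_dual f ->
  has_sup [set `|f x| | x in [set x : V | `|x| <= 1]].
Proof.
move=> [lf cf]; have [K K0 hK] := continuous_lin_bounded lf cf.
split; first by exists `|f 0|; exists 0 => //=; rewrite normr0.
exists K => _ [x /= x1 <-]; rewrite (le_trans (hK x))//.
by rewrite -[leRHS]mulr1 ler_wpM2l// ltW.
Qed.

Lemma dual_norm_bound x : in_dual f -> `|f x| <= dual_norm f * `|x|.
Proof.
move=> fd; have [lf _] := fd.
have [->|x0] := eqVneq x 0; first by rewrite (lin0 lf) !normr0 mulr0.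
have nx : 0 < `|x| by rewrite normr_gt0.
have : `|f (`|x|^-1 *: x)| <= dual_norm f.
  apply: sup_upper_bound; first exact: dual_norm_has_sup.
  exists (`|x|^-1 *: x) => //=.
  by rewrite normrZ normfV normr_id mulVf ?gt_eqF.
by rewrite linZ// normrM normfV normr_id ler_pdivrMl// mulrC.
Qed.

Lemma dual_norm_ge0 : in_dual f -> 0 <= dual_norm f.
Proof.
move=> fd; apply: (le_trans _ (sup_upper_bound (dual_norm_has_sup fd) _)).
  exact: (normr_ge0 (f 0)).
by exists 0 => //=; rewrite normr0.
Qed.

Lemma dual_norm_le K : 0 <= K -> (forall x, `|f x| <= K * `|x|) ->
  dual_norm f <= K.
Proof.
move=> K0 hK; apply: ge_sup.
  by exists `|f 0|; exists 0 => //=; rewrite normr0.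
move=> _ [x /= x1 <-]; rewrite (le_trans (hK x))//.
by rewrite -[leRHS]mulr1 ler_wpM2l.
Qed.

End DualNorm.

Lemma inf_attained (R : realType) (S : set R) a :
  S a -> (forall s, S s -> a <= s) -> inf S = a.
Proof.
move=> Sa amin; apply/eqP; rewrite eq_le; apply/andP; split.
  by apply: ge_inf => //; exists a.
by apply: lb_le_inf => //; exists a.
Qed.

Section HahnBanach.
Variables (R : realType) (V : lmodType R) (p : V -> R).
Hypothesis pD : forall x z, p (x + z) <= p x + p z.
Hypothesis pZ : forall a x, 0 < a -> p (a *: x) = a * p x.

(* G is the graph of a linear functional, defined on a subspace of V and
   dominated there by the sublinear functional p. *)
Definition dominated_graph (G : set (V * R)) : Prop :=
  [/\ G (0, 0),
      (forall a x s z t, G (x, s) -> G (z, t) -> G (a *: x + z, a * s + t)),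
      (forall x s t, G (x, s) -> G (x, t) -> s = t) &
      (forall x s, G (x, s) -> s <= p x)].

Lemma dominated_graphN (A : set (V * R)) x s :
  dominated_graph A -> A (x, s) -> A (- x, - s).
Proof.
case=> A0 cl _ _ Axs; have := cl (-1) _ _ _ _ Axs A0.
by rewrite scaleN1r mulN1r !addr0.
Qed.

Definition graph_extension (A : set (V * R)) (x0 : V) (t0 : R) : set (V * R) :=
  [set q | exists a x t, A (x, t) /\ q = (x + a *: x0, t + a * t0)].

(* The value t0 given to x0 must lie in this interval for p to keep
   dominating; the interval is nonempty by subadditivity of p. *)
Lemma extension_value (A : set (V * R)) x0 : dominated_graph A ->
  exists t0, forall u s, A (u, s) -> s - p (u - x0) <= t0 <= p (u + x0) - s.
Proof.
move=> [A0 cl _ dm].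
pose S := [set w | exists u s, A (u, s) /\ w = s - p (u - x0)].
have ubS w r : A (w, r) -> ubound S (p (w + x0) - r).
  move=> Awr _ [u [s [Aus ->]]].
  have dom_sum := dm _ _ (cl 1 _ _ _ _ Aus Awr); rewrite scale1r mul1r in dom_sum.
  have sub := pD (u - x0) (w + x0); rewrite addrACA addNr addr0 in sub.
  lra.
have hS : has_sup S.
  split; first by exists (0 - p (0 - x0)); exists 0, 0.
  by exists (p (0 + x0) - 0); apply: ubS.
exists (sup S) => u s Aus; apply/andP; split.
  by apply: sup_upper_bound => //; exists u, s.
by apply: ge_sup; [case: hS | exact: ubS].
Qed.

Section Extension.
Variables (A : set (V * R)) (x0 : V) (t0 : R).
Hypothesis gA : dominated_graph A.
Hypothesis x0_out : forall t, ~ A (x0, t).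
Hypothesis t0_bracket :
  forall u s, A (u, s) -> s - p (u - x0) <= t0 <= p (u + x0) - s.

(* Since x0 is outside the domain of A, the decomposition x + a x0 is unique. *)
Lemma extension_functional x s t :
  graph_extension A x0 t0 (x, s) -> graph_extension A x0 t0 (x, t) -> s = t.
Proof.
have [A0 cl fn _] := gA.
move=> [a [u [r [Aur [-> ->]]]]] [b [w [q [Awq]]]] [E ->].
have [ab|ab] := eqVneq a b.
  by move: E; rewrite ab => /addIr uw; rewrite uw in Aur; rewrite (fn _ _ _ Aur Awq).
suff : A (x0, (a - b)^-1 * (q - r)) by move/x0_out.
have Awu := cl 1 _ _ _ _ Awq (dominated_graphN gA Aur); rewrite scale1r mul1r in Awu.
have := cl (a - b)^-1 _ _ _ _ Awu A0; rewrite !addr0.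
suff -> : (a - b)^-1 *: (w - u) = x0 by [].
have -> : w - u = (a - b) *: x0.
  apply/eqP; rewrite subr_eq scalerBl; apply/eqP/(addIr (b *: x0)).
  by rewrite -E addrAC subrK addrC.
by rewrite scalerA mulVf ?scale1r // subr_eq0.
Qed.

(* Domination on x + a x0: rescale to the case a = 1 or a = -1, where it is
   exactly the bracket condition on t0. *)
Lemma extension_dominated x s : graph_extension A x0 t0 (x, s) -> s <= p x.
Proof.
have [A0 cl _ dm] := gA.
move=> [a [u [r [Aur [-> ->]]]]].
have scaled b : A (b *: u, b * r) by have := cl b _ _ _ _ Aur A0; rewrite !addr0.
have [a0|a0|->] := ltgtP a 0; last by rewrite scale0r mul0r !addr0; exact: dm.
- pose b := - a; have b0 : 0 < b by rewrite oppr_gt0.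
  have := ler_wpM2l (ltW b0) (andP (t0_bracket (scaled b^-1))).1.
  rewrite mulrBr mulrA mulfV ?gt_eqF// mul1r => bound.
  have -> : u + a *: x0 = b *: (b^-1 *: u - x0).
    by rewrite scalerBr scalerA mulfV ?gt_eqF// scale1r /b scaleNr opprK.
  rewrite pZ//; rewrite /b in bound *; lra.
- have := ler_wpM2l (ltW a0) (andP (t0_bracket (scaled a^-1))).2.
  rewrite mulrBr mulrA mulfV ?gt_eqF// mul1r => bound.
  have -> : u + a *: x0 = a *: (a^-1 *: u + x0).
    by rewrite scalerDr scalerA mulfV ?gt_eqF// scale1r.
  rewrite pZ//; lra.
Qed.

Lemma extension_dominated_graph : dominated_graph (graph_extension A x0 t0).
Proof.
have [A0 cl _ _] := gA.
split; [|move=> c|exact: extension_functional|exact: extension_dominated].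
- by exists 0, 0, 0; split => //; rewrite scale0r mul0r !addr0.
- move=> _ _ _ _ [a [x [t [Axt [-> ->]]]]] [b [z [r [Azr [-> ->]]]]].
  exists (c * a + b), (c *: x + z), (c * t + r); split; first exact: cl.
  congr pair; first by rewrite scalerDr scalerA scalerDl addrACA.
  by rewrite mulrDr mulrA mulrDl addrACA.
Qed.

Lemma graph_extension_sub : A `<=` graph_extension A x0 t0.
Proof. by move=> [x t] Axt; exists 0, x, t; rewrite scale0r mul0r !addr0. Qed.

Lemma graph_extension_x0 : graph_extension A x0 t0 (x0, t0).
Proof. by exists 1, 0, 0; rewrite scale1r mul1r !add0r; have [] := gA. Qed.

End Extension.

Variable G0 : set (V * R).
Hypothesis gG0 : dominated_graph G0.

(* The family to which Zorn's lemma is applied; the empty set is allowed so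
   that the union of the empty chain belongs to it. *)
Definition extends_G0 (G : set (V * R)) : Prop :=
  G = set0 \/ (G0 `<=` G /\ dominated_graph G).

Lemma chain_common_member (F : set (set (V * R))) q1 q2 :
  F `<=` extends_G0 -> total_on F subset ->
  (\bigcup_(X in F) X) q1 -> (\bigcup_(X in F) X) q2 ->
  exists2 G, F G & [/\ G0 `<=` G, dominated_graph G, G q1 & G q2].
Proof.
move=> FP Ftot [G1 FG1 G1q] [G2 FG2 G2q].
have [G12|G21] := Ftot _ _ FG1 FG2.
- exists G2 => //; have [E|[]] := FP _ FG2; first by rewrite E in G2q.
  by move=> ? ?; split => //; apply: G12.
- exists G1 => //; have [E|[]] := FP _ FG1; first by rewrite E in G1q.
  by move=> ? ?; split => //; apply: G21.
Qed.

Lemma extends_G0_chain (F : set (set (V * R))) :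
  F `<=` extends_G0 -> total_on F subset -> extends_G0 (\bigcup_(X in F) X).
Proof.
move=> FP Ftot; set U := \bigcup_(X in F) X.
have [U0|Un0] := pselect (U = set0); [by left | right].
have [q Uq] : U !=set0 by apply/set0P/eqP.
have common := chain_common_member FP Ftot.
have [G FG [G0G gG _ _]] := common _ _ Uq Uq.
split; first by move=> r G0r; exists G => //; apply: G0G.
split.
- by exists G => //; case: gG.
- move=> a x s z t U1 U2; have [G' FG' [_ [_ cl _ _] h1 h2]] := common _ _ U1 U2.
  by exists G' => //; apply: cl.
- move=> x s t U1 U2; have [G' _ [_ [_ _ fn _] h1 h2]] := common _ _ U1 U2.
  exact: fn h1 h2.
- move=> x s U1; have [G' _ [_ [_ _ _ dm] h1 _]] := common _ _ U1 U1.
  exact: dm h1.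
Qed.

(* Hahn-Banach: a linear functional on a subspace dominated by p extends to
   a linear functional on V dominated by p.  A maximal dominated graph
   containing G0 has full domain, since otherwise it could be extended. *)
Theorem hahn_banach : exists g : V -> R,
  [/\ lin g, (forall x, g x <= p x) & (forall x s, G0 (x, s) -> g x = s)].
Proof.
have [A [[A0|[G0A gA]] Amax]] := Zorn_bigcup extends_G0_chain.
  exfalso; apply: (Amax G0); last by right; split.
  rewrite A0; split => //; have [G00 _ _ _] := gG0; by move/(_ (0, 0) G00).
have [_ cl fn dm] := gA.
have total x0 : exists t, A (x0, t).
  apply: contrapT => nx; have x0_out t : ~ A (x0, t) by move=> ?; apply: nx; exists t.
  have [t0 bracket] := extension_value x0 gA.
  apply: (Amax (graph_extension A x0 t0)); last first.
    right; split; last exact: extension_dominated_graph.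
    by move=> q /G0A; apply: graph_extension_sub.
  split; first exact: graph_extension_sub.
  by move=> ext; apply: (x0_out t0); apply: ext; apply: graph_extension_x0.
pose g x := projT1 (cid (total x)).
have gP x : A (x, g x) by rewrite /g; case: cid.
exists g; split.
- by move=> a x z; apply: (fn _ _ _ (gP _)); apply: cl; apply: gP.
- by move=> x; apply: dm; apply: gP.
- by move=> x s /G0A Axs; apply: (fn _ _ _ (gP _) Axs).
Qed.

End HahnBanach.

Section RowVectors.
Variables (R : realType) (m : nat).

Lemma coord_le_norm (w : 'rV[R]_m) j : `|w ord0 j| <= `|w|.
Proof.
rewrite [leRHS]/Num.norm /= mx_normrE; apply/bigmax_geP; right => /=.
by exists (ord0, j).
Qed.

Lemma lincomb_continuous (W : normedModType R) (a : 'I_m -> W) :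
  continuous (fun v : 'rV[R]_m => \sum_j v ord0 j *: a j).
Proof.
pose C := \sum_j `|a j| + 1.
have C0 : 0 < C by rewrite /C ltr_wpDl ?sumr_ge0.
have lipschitz (u v : 'rV[R]_m) :
    `|\sum_j u ord0 j *: a j - \sum_j v ord0 j *: a j| <= C * `|u - v|.
  rewrite -sumrB; apply: (le_trans (ler_norm_sum _ _ _)).
  rewrite /C mulrDl mul1r mulr_suml -[X in X <= _]addr0; apply: lerD => //.
  apply: ler_sum => j _; rewrite -scalerBl normrZ mulrC ler_wpM2l//.
  by have := coord_le_norm (u - v) j; rewrite !mxE.
move=> x; apply/(@cvgrPdist_lt _ _ _ (nbhs x)) => e e_gt0; near=> z.
rewrite (le_lt_trans (lipschitz _ _))// -ltr_pdivlMl//.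
near: z; apply: cvgr_dist_lt => //; rewrite mulrC divr_gt0//.
Unshelve. all: by end_near. Qed.

Lemma closed_level (F : 'rV[R]_m -> R) c : continuous F ->
  closed [set v | F v = c].
Proof.
move=> cF; apply: (@preimage_closed _ _ F [set x | x = c]); last exact: closed_eq.
by move=> x _; exact: cF.
Qed.

Lemma closed_sublevel (F : 'rV[R]_m -> R) c : continuous F ->
  closed [set v | F v <= c].
Proof.
move=> cF; apply: (@preimage_closed _ _ F [set x | x <= c]); last exact: closed_le.
by move=> x _; exact: cF.
Qed.

Lemma norm_bounded_set (A : set 'rV[R]_m) K : (forall v, A v -> `|v| <= K) ->
  bounded_set A.
Proof.
move=> hA; exists K; split; first exact: num_real.
by move=> M KM v Av /=; rewrite (le_trans (hA _ Av))// ltW.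
Qed.

End RowVectors.

Section DualProblem.
Variables (R : realType) (V : normedModType R) (m : nat).
Variables (nu : 'I_m -> V) (y : 'I_m -> R).

Definition D_minimizer (c : 'I_m -> R) : Prop :=
  dot c y = 1 /\ forall c', dot c' y = 1 -> `|Lstar nu c| <= `|Lstar nu c'|.

Lemma D_minimizer_solution c : D_minimizer c -> D_solution nu y c.
Proof.
move=> [dc cmin]; split => //; apply/esym/inf_attained; first by exists c.
by move=> _ [c' dc' <-]; exact: cmin.
Qed.

(* Coefficient vectors are handled as row vectors, to use the topology of
   'rV[R]_m; the objective of (D) in these coordinates: *)
Definition rcoord (v : 'rV[R]_m) : 'I_m -> R := fun j => v ord0 j.
Definition D_objective (v : 'rV[R]_m) : R := `|Lstar nu (rcoord v)|.

Lemma D_objective_continuous : continuous D_objective.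
Proof.
move=> x; apply: (@continuous_comp _ _ _ (fun v => Lstar nu (rcoord v))).
  exact: lincomb_continuous.
exact: norm_continuous.
Qed.

Lemma D_objectiveZ a v : D_objective (a *: v) = `|a| * D_objective v.
Proof.
rewrite /D_objective /Lstar -normrZ scaler_sumr; congr `|_|.
by apply: eq_bigr => j _; rewrite /rcoord mxE scalerA.
Qed.

(* Linear independence makes the objective a norm, hence comparable to the
   norm of 'rV[R]_m: its minimum on the (compact) unit sphere is positive. *)
Lemma D_objective_coercive (j0 : 'I_m) : lin_indep nu ->
  exists2 delta, 0 < delta & forall v, delta * `|v| <= D_objective v.
Proof.
move=> li; pose U := [set v : 'rV[R]_m | `|v| = 1].
pose w := (const_mx 1 : 'rV[R]_m).
have w0 : w != 0.
  by apply/negP => /eqP/matrixP/(_ ord0 j0); rewrite !mxE; apply/eqP; rewrite oner_neq0.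
have U0 : U !=set0.
  by exists (`|w|^-1 *: w); rewrite /U /= normrZ normfV normr_id mulVf ?normr_eq0.
have cU : compact U.
  apply: bounded_closed_compact; last exact: closed_level (@norm_continuous _ _).
  by apply: (@norm_bounded_set _ _ _ 1) => v ->.
have [v1 /set_mem Uv1 v1min] :=
  compact_EVT_min U0 cU (continuous_subspaceT D_objective_continuous).
exists (D_objective v1).
  rewrite lt_def normr_ge0 andbT; apply/negP => /eqP/normr0_eq0/li v1_0.
  have : v1 = 0 by apply/matrixP => i j; rewrite (ord1 i) mxE; exact: v1_0.
  by move=> v10; move: Uv1; rewrite /U /= v10 normr0 => /eqP; rewrite eq_sym oner_eq0.
move=> v; have [->|vn0] := eqVneq v 0; first by rewrite normr0 mulr0 normr_ge0.
have nv : 0 < `|v| by rewrite normr_gt0.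
have : D_objective v1 <= D_objective (`|v|^-1 *: v).
  apply: v1min; apply/mem_set.
  by rewrite /U /= normrZ normfV normr_id mulVf// gt_eqF.
by rewrite D_objectiveZ normfV normr_id ler_pdivlMl// mulrC.
Qed.

Definition D_constraint (v : 'rV[R]_m) : R := dot (rcoord v) y.

Lemma D_constraint_continuous : continuous D_constraint.
Proof.
have -> : D_constraint = (fun v : 'rV[R]_m => \sum_j v ord0 j *: (y j : R^o)).
  by apply/funext => v; rewrite /D_constraint /dot; apply: eq_bigr.
exact: lincomb_continuous.
Qed.

(* (D) is feasible when y <> 0: take c = e_j0 / y_j0 with y_j0 <> 0. *)
Lemma D_feasible j0 : y j0 != 0 -> exists v0, D_constraint v0 = 1.
Proof.
move=> yj0; exists (\row_j (if j == j0 then (y j0)^-1 else 0)).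
rewrite /D_constraint /dot (bigD1 j0)//= big1 ?addr0.
  by rewrite /rcoord mxE eqxx mulVf.
by move=> j /negbTE jj0; rewrite /rcoord mxE jj0 mul0r.
Qed.

(* The dual problem (D) has a solution: by coercivity, the points of the
   hyperplane <c,y> = 1 doing at least as well as a feasible v0 form a compact
   set, on which the continuous objective attains its minimum. *)
Lemma D_minimizer_exists : lin_indep nu -> y <> (fun _ => 0) ->
  exists c, D_minimizer c.
Proof.
move=> li y0; have [j0 yj0] : exists j0, y j0 != 0.
  apply: contra_notP y0 => yz; apply/funext => j.
  by apply/eqP; apply: contra_notT yz => yj; exists j.
have [delta delta0 coer] := D_objective_coercive j0 li.
have [v0 dv0] := D_feasible yj0.
pose K := D_objective v0 / delta.
have smallK v : D_objective v <= D_objective v0 -> `|v| <= K.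
  by move=> vv0; rewrite /K ler_pdivlMr// mulrC (le_trans (coer v)).
pose A := [set v : 'rV[R]_m | D_constraint v = 1] `&` [set v | `|v| <= K].
have A_v0 : A v0 by split => //=; apply: smallK.
have cA : compact A.
  apply: bounded_closed_compact; first by apply: (@norm_bounded_set _ _ _ K) => v [].
  apply: closedI; first exact: closed_level D_constraint_continuous.
  exact: closed_sublevel (@norm_continuous _ _).
have [c /set_mem [Ac1 _] cmin] :=
  compact_EVT_min (ex_intro _ v0 A_v0) cA (continuous_subspaceT D_objective_continuous).
exists (rcoord c); split => // c' dc'.
pose v := (\row_j c' j : 'rV[R]_m).
have cv : rcoord v = c' by apply/funext => j; rewrite /rcoord mxE.
have dvv : D_constraint v = 1 by rewrite /D_constraint cv.
rewrite -cv; have [vv0|/ltW v0v] := leP (D_objective v) (D_objective v0).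
  by apply: cmin; apply/mem_set; split => //=; apply: smallK.
by apply: le_trans v0v; apply: cmin; apply/mem_set.
Qed.

End DualProblem.

(* An element of the subdifferential of the norm at any point has dual norm
   at most 1: test the subgradient inequality at z = x + u. *)
Lemma subdiff_norm_bound (R : realType) (V : normedModType R) (x : V) g u :
  subdiff_norm x g -> `|g u| <= `|u|.
Proof.
move=> [[lg _] gsub].
have gle w : g w <= `|w|.
  have := gsub (x + w); rewrite addrAC subrr add0r => sg.
  by apply: (le_trans sg); rewrite lerBlDl ler_normD.
by rewrite ler_norml gle andbT lerNl -(linN lg) -normrN gle.
Qed.

Section Interpolation.
Variables (R : realType) (V : normedModType R) (m : nat).
Variables (nu : 'I_m -> V) (y : 'I_m -> R).

Lemma interpolant_Lstar f c : interp_set nu y f -> f (Lstar nu c) = dot c y.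
Proof.
by move=> [[lf _] fy]; rewrite /Lstar lin_sum//; apply: eq_bigr => j _; rewrite fy.
Qed.

Lemma Lstar_gt0 f c : interp_set nu y f -> dot c y = 1 -> 0 < `|Lstar nu c|.
Proof.
move=> fM dc; rewrite normr_gt0; apply/negP => /eqP L0.
have := interpolant_Lstar c fM; rewrite L0 (lin0 fM.1.1) dc => /eqP.
by rewrite eq_sym oner_eq0.
Qed.

(* Weak duality: 1 = f(x_c) <= ||f|| |x_c| for every interpolant f. *)
Lemma interpolant_norm_lower f c : interp_set nu y f -> dot c y = 1 ->
  `|Lstar nu c|^-1 <= dual_norm f.
Proof.
move=> fM dc; have x0 := Lstar_gt0 fM dc.
rewrite -div1r ler_pdivrMr// -{1}dc -(interpolant_Lstar c fM).
exact: le_trans (ler_norm _) (dual_norm_bound _ fM.1).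
Qed.

(* Part (b): an interpolant of the form g / |x_c| with g a subgradient of the
   norm at x_c attains the lower bound, hence is of minimal norm. *)
Lemma dual_char_mni c f : dot c y = 1 -> dual_char_set nu y c f ->
  mni_solution nu y f.
Proof.
move=> dc [[g gsub fE] fM]; have x0 := Lstar_gt0 fM dc.
split => //; apply/esym/inf_attained; first by exists f.
move=> _ [h hM <-]; apply: le_trans (interpolant_norm_lower hM dc).
apply: dual_norm_le; first by rewrite invr_ge0 ltW.
move=> z; rewrite fE normrM normfV normr_id ler_pM2l ?invr_gt0//.
exact: subdiff_norm_bound gsub.
Qed.

Definition span_graph : set (V * R) :=
  [set q | exists a, q = (Lstar nu a, dot a y)].

Lemma Lstar_lincomb a (a1 a2 : 'I_m -> R) :
  a *: Lstar nu a1 + Lstar nu a2 = Lstar nu (fun j => a * a1 j + a2 j).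
Proof.
rewrite /Lstar scaler_sumr -big_split /=; apply: eq_bigr => j _.
by rewrite scalerA scalerDl.
Qed.

Lemma dot_lincomb a (a1 a2 : 'I_m -> R) :
  a * dot a1 y + dot a2 y = dot (fun j => a * a1 j + a2 j) y.
Proof.
rewrite /dot mulr_sumr -big_split /=; apply: eq_bigr => j _.
by rewrite mulrA mulrDl.
Qed.

Lemma Lstar_inj : lin_indep nu -> injective (Lstar nu).
Proof.
move=> li a1 a2 E; apply/funext => j; apply/eqP; rewrite -subr_eq0; apply/eqP.
have diff : \sum_j (a1 j - a2 j) *: nu j = Lstar nu a1 - Lstar nu a2.
  by rewrite /Lstar -sumrB; apply: eq_bigr => i _; rewrite scalerBl.
by move: j; apply: li; rewrite diff E subrr.
Qed.

Lemma Lstar_indep_gt0 c : lin_indep nu -> dot c y = 1 -> 0 < `|Lstar nu c|.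
Proof.
move=> li dc; rewrite normr_gt0; apply/eqP => L0.
have c0 : c = fun _ => 0.
  by apply: (Lstar_inj li); rewrite L0 /Lstar big1 // => j _; rewrite scale0r.
have : dot c y = 0 by rewrite c0 /dot big1 // => j _; rewrite mul0r.
by rewrite dc => /eqP; rewrite oner_eq0.
Qed.

(* If c solves (D) with value d, then <a,y> <= |x_a| / d on span(nu): for
   <a,y> > 0 apply the minimality of c to a / <a,y>. *)
Lemma span_graph_dominated c : lin_indep nu -> D_minimizer nu y c ->
  dominated_graph (fun z => `|Lstar nu c|^-1 * `|z|) span_graph.
Proof.
move=> li [dc cmin]; split.
- exists (fun _ => 0); congr pair; first by rewrite /Lstar big1 // => j _; rewrite scale0r.
  by rewrite /dot big1 // => j _; rewrite mul0r.
- move=> a _ _ _ _ [a1 [-> ->]] [a2 [-> ->]].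
  by exists (fun j => a * a1 j + a2 j); rewrite Lstar_lincomb dot_lincomb.
- by move=> _ _ _ [a1 [-> ->]] [a2 [/(Lstar_inj li) -> ->]].
- move=> _ _ [a [-> ->]].
  have [ay_le0|ay_gt0] := lerP (dot a y) 0.
    by apply: (le_trans ay_le0); rewrite mulr_ge0 // invr_ge0.
  set b := dot a y; have : `|Lstar nu c| <= `|Lstar nu (fun j => b^-1 * a j)|.
    apply: cmin; rewrite /dot; under eq_bigr do rewrite -mulrA.
    by rewrite -mulr_sumr mulVf ?gt_eqF.
  have -> : Lstar nu (fun j => b^-1 * a j) = b^-1 *: Lstar nu a.
    by rewrite /Lstar scaler_sumr; apply: eq_bigr => j _; rewrite scalerA.
  have x0 := Lstar_indep_gt0 li dc.
  rewrite normrZ normfV gtr0_norm// => cle.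
  by rewrite mulrC ler_pdivlMr// -ler_pdivlMl.
Qed.

Lemma Lstar_delta j : Lstar nu (fun i => (i == j)%:R) = nu j.
Proof.
rewrite /Lstar (bigD1 j)//= big1 ?addr0 ?eqxx ?scale1r//.
by move=> i /negbTE ->; rewrite scale0r.
Qed.

Lemma dot_delta j : dot (fun i => (i == j)%:R) y = y j.
Proof.
rewrite /dot (bigD1 j)//= big1 ?addr0 ?eqxx ?mul1r//.
by move=> i /negbTE ->; rewrite mul0r.
Qed.

(* Strong duality, existence half: if c solves (D) then some interpolant has
   norm at most 1/|x_c|, namely a Hahn-Banach extension of span_graph. *)
Lemma interpolant_norm_le c : lin_indep nu -> D_minimizer nu y c ->
  exists g, interp_set nu y g /\ dual_norm g <= `|Lstar nu c|^-1.
Proof.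
move=> li cD; have x0 := Lstar_indep_gt0 li cD.1.
set d := `|Lstar nu c| in x0 *.
pose p (z : V) := d^-1 * `|z|.
have pD z1 z2 : p (z1 + z2) <= p z1 + p z2.
  by rewrite /p -mulrDr ler_wpM2l ?invr_ge0 ?ler_normD// ltW.
have pZ a z : 0 < a -> p (a *: z) = a * p z.
  by move=> a0; rewrite /p normrZ gtr0_norm// mulrCA.
have [g [lg gp gG]] := hahn_banach pD pZ (span_graph_dominated li cD).
have gb z : `|g z| <= d^-1 * `|z|.
  by rewrite ler_norml gp andbT lerNl -(linN lg) -normrN gp.
exists g; split; last by apply: dual_norm_le; [rewrite invr_ge0 ltW|].
split; first by split => //; exact: bounded_lin_continuous gb.
by move=> j; rewrite -Lstar_delta -dot_delta; apply: gG; eexists.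
Qed.

(* Part (a): a minimal interpolant f has norm 1/|x_c| and f(x_c) = 1, so
   |x_c| f is a subgradient of the norm at x_c. *)
Lemma mni_dual_char c f : lin_indep nu -> D_minimizer nu y c ->
  mni_solution nu y f -> dual_char_set nu y c f.
Proof.
move=> li cD [fM fmin]; have x0 := Lstar_indep_gt0 li cD.1.
have fx : f (Lstar nu c) = 1 by rewrite interpolant_Lstar // cD.1.
set x := Lstar nu c in x0 fx *; set d := `|x| in x0 *.
have fle : dual_norm f <= d^-1.
  have [g [gM gle]] := interpolant_norm_le li cD.
  rewrite fmin; apply: le_trans gle; apply: ge_inf; last by exists g.
  by exists 0 => _ [h hM <-]; exact: dual_norm_ge0 hM.1.
split => //; exists (fun v => d * f v); last first.
  by apply/funext => v; rewrite mulKf ?gt_eqF.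
split => [|z /=]; first exact: in_dualZ fM.1.
rewrite (linB fM.1.1) fx mulrBr mulr1 lerD2r.
apply: (le_trans (ler_norm _)); rewrite normrM gtr0_norm// -ler_pdivlMl//.
exact: le_trans (dual_norm_bound _ fM.1) (ler_wpM2r (normr_ge0 z) fle).
Qed.

End Interpolation.

Theorem mainTheorem11 (R : realType) (V : normedModType R) (m : nat)
  (nu : 'I_m -> V) (y : 'I_m -> R) :
  lin_indep nu -> y <> (fun _ => 0) ->
  (forall f : V -> R, mni_solution nu y f ->
     exists c : 'I_m -> R, D_solution nu y c /\ dual_char_set nu y c f) /\
  (forall (c : 'I_m -> R) (f : V -> R), in_dual f -> D_solution nu y c ->
     dual_char_set nu y c f -> mni_solution nu y f).
Proof.
move=> li y0; split.
  move=> f f_mni; have [c cD] := D_minimizer_exists li y0.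
  by exists c; split; [exact: D_minimizer_solution | exact: mni_dual_char].
by move=> c f _ [dc _]; exact: dual_char_mni.
Qed.
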